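(* For all non-negative integers $n$ and positive integers $k,m$, $$\det\Big(D_{2n+2j-2i}^{(2k+2m-1)}\Big)_{0\le i,j\le k-1}=(-1)^{km}\det\Big(D_{-2n-2j+2i-2k-2m}^{(2k+2m-1)}\Big)_{0\le i,j\le m-1}.$$
   Context: For $N\ge0$ and $0\le r,s\le K$, $C_N^{(K)}(r\to s)$ is the number of lattice paths with steps $(1,1),(1,-1)$ from $(0,r)$ to $(N,s)$ never below the $x$-axis nor above $y=K$. For odd $K$, $F(x)=\sum_{N\ge0}C_N^{(K)}(r\to s)x^N$ is rational $p/q$ with $\deg p<\deg q$, $q(0)\ne0$, and for negative $N$, $C_N^{(K)}(r\to s)$ is defined by $\sum_{N\ge1}C_{-N}^{(K)}(r\to s)x^N=-F(1/x)$ (equivalently by running the linear recurrence backwards); thus $C_N^{(K)}(r\to s)$ is defined for all integers $N$, and equals the path count for $N\ge0$. For all integers $n$, $D_{2n}^{(K)}:=C_{2n+K}^{(K)}(0\to K)$. *)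

From mathcomp Require Import all_boot all_order all_algebra.
Set Implicit Arguments. Unset Strict Implicit. Unset Printing Implicit Defensive.
Import Order.TTheory GRing.Theory Num.Theory.
Local Open Scope ring_scope.

(* Number of lattice paths with steps (1,1),(1,-1) from (0,r) to (N,s) that
   stay in the strip 0 <= y <= K.  A path is the sequence of its heights
   y_0,...,y_N, each in {0,...,K} (type 'I_K.+1). *)
Definition pathcount (K N r s : nat) : nat :=
  #|[set y : {ffun 'I_N.+1 -> 'I_K.+1} |
      [&& val (y ord0) == r, val (y ord_max) == s &
          [forall i : 'I_N,
             let a := val (y (widen_ord (leqnSn N) i)) in
             let b := val (y (lift ord0 i)) in
             (a.+1 == b) || (b.+1 == a)]]]|.

Definition transfer (K : nat) : 'M[rat]_K.+1 :=
  \matrix_(i, j) (if ((i : nat).+1 == j) || ((j : nat).+1 == i) then 1 else 0).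

(* For N >= 0 it is the
   path count; for N = -(n+1) < 0 it is the (r,s) entry of (A^{-1})^{n+1},
   A = transfer K, which is exactly the coefficient given by -F(1/x). *)
Definition C (K : nat) (N : int) (r s : nat) : rat :=
  match N with
  | Posz n => (pathcount K n r s)%:R
  | Negz n => ((invmx (transfer K)) ^+ n.+1) (inord r) (inord s)
  end.

Definition D (K : nat) (t : int) : rat := C K (t + (K : int)) 0 K.

From mathcomp Require Import all_boot all_order all_algebra.
From mathcomp Require Import zify.
Import GRing.Theory.
Local Open Scope ring_scope.
Set Implicit Arguments. Unset Strict Implicit. Unset Printing Implicit Defensive.

(* A path in the strip 0..K, K = 2d - 1, alternates between even and odd
   heights, so in a basis ordered by parity the transfer matrix of the strip is
   [[0, M], [M^T, 0]], with M the d x d lower bidiagonal matrix of ones.  Hence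
   every odd power of it, negative powers included, has (0, K) entry
   (B^t M)(0, d-1) with B = M M^T: the sequence a(t) := D_{2t} satisfies
   a(t) = (B^(t+d-1) M)(0, d-1) for all integers t, and det B = 1.
   A d x d determinant det(a(c_j - i)) therefore does not change when all c_j
   are shifted by n: the matrix factors as (rows of B^-i) B^n (columns of
   B^c_j M).  With d = k + m, take c_j = j for j < k and c_j = j - d - n for
   j >= k.  Counting paths gives a(t) = 0 for 1 - d <= t <= -1 and a(0) = 1,
   and M^-1 gives a(-d) = (-1)^(d-1).  So before the shift the matrix is block
   upper triangular with determinant the m x m determinant of the theorem, and
   after it block lower triangular with determinant the k x k one times
   (-1)^((d-1)m). *)

Lemma widen_lift_max n (j : 'I_n) : widen_ord (leqnSn n) j = lift ord_max j.
Proof. by apply/val_inj; rewrite /= /bump leqNgt ltn_ord. Qed.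

Lemma lift0_lift_max n (j : 'I_n) :
  lift ord0 (lift ord_max j) = lift ord_max (lift ord0 j).
Proof. by apply/val_inj; rewrite /= /bump !leq0n !add1n ltnS leqNgt ltn_ord. Qed.

Lemma lift0_max n : lift ord0 (@ord_max n) = ord_max.
Proof. by apply/val_inj; rewrite /= /bump. Qed.

Section Walks.
Variables (R : pzSemiRingType) (p : nat) (e : rel 'I_p).

Definition is_walk N (y : {ffun 'I_N.+1 -> 'I_p}) :=
  [forall i : 'I_N, e (y (widen_ord (leqnSn N) i)) (y (lift ord0 i))].

Definition walks N (r s : 'I_p) :=
  [set y : {ffun 'I_N.+1 -> 'I_p} | [&& y ord0 == r, y ord_max == s & is_walk y]].

Definition rcons_ffun N (y : {ffun 'I_N.+1 -> 'I_p}) (t : 'I_p) : {ffun 'I_N.+2 -> 'I_p} :=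
  [ffun i => if unlift ord_max i is Some j then y j else t].

Lemma rcons_ffun_bij N :
  bijective (fun yt : {ffun 'I_N.+1 -> 'I_p} * 'I_p => rcons_ffun yt.1 yt.2).
Proof.
exists (fun z : {ffun 'I_N.+2 -> 'I_p} => ([ffun j => z (lift ord_max j)], z ord_max)).
  move=> [y t]; congr pair; last by rewrite ffunE unlift_none.
  by apply/ffunP => j; rewrite !ffunE liftK.
move=> z; apply/ffunP => i; rewrite !ffunE.
by case: unliftP => [j|] ->; rewrite ?ffunE.
Qed.

Lemma rcons_ffun_lift N y t j : @rcons_ffun N y t (lift ord_max j) = y j.
Proof. by rewrite ffunE liftK. Qed.

Lemma rcons_ffun_last N y t : @rcons_ffun N y t ord_max = t.
Proof. by rewrite ffunE unlift_none. Qed.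

Lemma rcons_ffun_first N y t : @rcons_ffun N y t ord0 = y ord0.
Proof.
by rewrite (_ : ord0 = lift ord_max ord0) ?rcons_ffun_lift //; apply/val_inj.
Qed.

Lemma is_walk_rcons N y t :
  is_walk (@rcons_ffun N y t) = is_walk y && e (y ord_max) t.
Proof.
apply/forallP/andP => [walk_z | [/forallP walk_y last_step] i].
  split; last by have := walk_z ord_max; rewrite widen_lift_max lift0_max
                   rcons_ffun_lift rcons_ffun_last.
  apply/forallP => j; have := walk_z (lift ord_max j).
  by rewrite widen_lift_max lift0_lift_max !rcons_ffun_lift widen_lift_max.
case: (unliftP ord_max i) => [j|] ->.
  by rewrite widen_lift_max lift0_lift_max !rcons_ffun_lift -widen_lift_max.
by rewrite widen_lift_max lift0_max rcons_ffun_lift rcons_ffun_last.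
Qed.

Lemma card_walks0 r s : #|walks 0 r s| = (r == s).
Proof.
have walk0 (y : {ffun 'I_1 -> 'I_p}) : is_walk y by apply/forallP => -[].
have max0 : (ord_max : 'I_1) = ord0 by apply/val_inj.
case: (eqVneq r s) => [<-|/negPf neq_rs].
  rewrite (_ : walks 0 r r = [set [ffun => r]]) ?cards1 //.
  apply/setP => y; rewrite !inE max0 walk0 andbT andbb.
  apply/eqP/eqP => [y0|->]; last by rewrite ffunE.
  apply/ffunP => i.
  by rewrite ord1 y0 ffunE.
rewrite (_ : walks 0 r s = set0) ?cards0 //.
apply/setP => y; rewrite !inE max0.
by case: eqP => //= ->; rewrite neq_rs.
Qed.

Lemma card_walksS N r s :
  #|walks N.+1 r s| = (\sum_t #|walks N r t| * e t s)%N.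
Proof.
rewrite -sum1_card big_mkcond /= (reindex _ (onW_bij _ (rcons_ffun_bij N))) /=.
rewrite -(pair_bigA _ (fun y t => if rcons_ffun y t \in walks N.+1 r s then 1 else 0)%N) /=.
under eq_bigr => y _.
  under eq_bigr => t _ do
    rewrite inE rcons_ffun_first rcons_ffun_last is_walk_rcons andbCA.
  rewrite (bigD1 s) //= eqxx big1 ?addn0 => [|t /negPf -> //].
  over.
under [RHS]eq_bigr => t _ do rewrite -sum1_card big_mkcond big_distrl /=.
rewrite exchange_big /=; apply: eq_bigr => y _.
rewrite (bigD1 (y ord_max)) //= big1 ?inE ?eqxx ?addn0 => [|t].
  by case: (y ord0 == r); case: (is_walk y); case: (e _ s).
by rewrite inE eq_sym andbCA => /negPf ->.
Qed.

Definition adjmx : 'M[R]_p := \matrix_(i, j) (e i j)%:R.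

Lemma card_walks_expmx N r s : (#|walks N r s|)%:R = (adjmx ^+ N) r s.
Proof.
elim: N r s => [|N IHN] r s; first by rewrite card_walks0 expr0 mxE.
rewrite card_walksS exprSr -mulmxE mxE natr_sum; apply: eq_bigr => t _.
by rewrite natrM IHN mxE.
Qed.

End Walks.

Definition strip_adj K : rel 'I_K.+1 := fun i j => (i.+1 == j) || (j.+1 == i).

Lemma transfer_adjmx K : transfer K = adjmx rat (@strip_adj K).
Proof. by apply/matrixP => i j; rewrite !mxE /strip_adj; case: ifP. Qed.

Lemma pathcount_expmx K N (r s : 'I_K.+1) :
  (pathcount K N r s)%:R = (transfer K ^+ N) r s.
Proof.
by rewrite transfer_adjmx -card_walks_expmx; congr (_%:R); apply: eq_card.
Qed.

Section Band.
Variables (R : pzSemiRingType) (p : nat) (A : 'M[R]_p).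
Hypothesis A_above : forall i j : 'I_p, (i.+1 < j)%N -> A i j = 0.
Hypothesis A_super : forall i j : 'I_p, i.+1 = j -> A i j = 1.

Lemma expmx_above N (i j : 'I_p) : (i + N < j)%N -> (A ^+ N) i j = 0.
Proof.
elim: N j => [|N IHN] j ltj.
  by rewrite expr0 mxE (_ : i == j = false) //; apply/negbTE; rewrite -val_eqE /=; lia.
rewrite exprSr -mulmxE mxE big1 // => l _.
have [lt_lj | ge_lj] := ltnP l.+1 j; first by rewrite A_above ?mulr0.
by rewrite IHN ?mul0r //; lia.
Qed.

Lemma expmx_super N (i j : 'I_p) : (i + N)%N = j -> (A ^+ N) i j = 1.
Proof.
elim: N j => [|N IHN] j eqj.
  by rewrite expr0 mxE (_ : i == j) //; rewrite -val_eqE /= -eqj addn0.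
have lt_pj : (j.-1 < p)%N by have := ltn_ord j; lia.
rewrite exprSr -mulmxE mxE (bigD1 (Ordinal lt_pj)) //= IHN /=; last by lia.
rewrite A_super /= ?mul1r; last by lia.
rewrite big1 ?addr0 // => l; rewrite -val_eqE /= => ne_l.
have [lt_lj | ge_lj] := ltnP l.+1 j; first by rewrite A_above ?mulr0.
by rewrite expmx_above ?mul0r //; lia.
Qed.

End Band.

Lemma mulr_exprM_rotate (R : pzRingType) (x y : R) n : x * (y * x) ^+ n = (x * y) ^+ n * x.
Proof.
elim: n => [|n IHn]; first by rewrite !expr0 mulr1 mul1r.
by rewrite exprSr mulrA IHn exprSr !mulrA.
Qed.

Section ParityOrdinals.
Variable d : nat.

Definition ord_half (i : 'I_d.*2) : 'I_d :=
  Ordinal (etrans (ltn_half_double _ _) (ltn_ord i)).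
Definition ord_even (x : 'I_d) : 'I_d.*2 := Ordinal (etrans (ltn_double _ _) (ltn_ord x)).
Definition ord_odd (x : 'I_d) : 'I_d.*2 := Ordinal (etrans (ltn_Sdouble _ _) (ltn_ord x)).

Lemma ord_half_even x : ord_half (ord_even x) = x.
Proof. by apply/val_inj; rewrite /= doubleK. Qed.

Lemma ord_half_odd x : ord_half (ord_odd x) = x.
Proof. by apply/val_inj; exact: (half_bit_double x true). Qed.

Lemma sum_ord_double (V : nmodType) (F : 'I_d.*2 -> V) :
  \sum_(l < d.*2) F l = \sum_(x < d) F (ord_even x) + \sum_(x < d) F (ord_odd x).
Proof.
have half_spec (l : 'I_d.*2) : (odd l + (ord_half l).*2)%N = l by exact: odd_double_half.
rewrite (bigID (fun l : 'I_d.*2 => odd l)) /= addrC.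
rewrite (reindex_onto ord_even ord_half) => [|l /negPf odd_l]; last first.
  by apply/val_inj; rewrite /= -[RHS]half_spec odd_l.
rewrite (reindex_onto ord_odd ord_half) => [|l odd_l]; last first.
  by apply/val_inj; rewrite /= -[RHS]half_spec odd_l.
congr (_ + _); apply: eq_bigl => x.
  by rewrite /= odd_double ord_half_even eqxx.
by rewrite /= odd_double ord_half_odd eqxx.
Qed.

End ParityOrdinals.

Section ParityBlocks.
Variables (R : pzRingType) (d : nat).
Implicit Types P X Y Q : 'M[R]_d.

(* The block matrix [[P, X], [Y, Q]] in the basis where index x of the first
   block is 2x and index x of the second block is 2x + 1. *)
Definition parity_mx P X Y Q : 'M[R]_d.*2 :=
  \matrix_(i, j) (if odd i then if odd j then Q else Y else if odd j then X else P)
                   (ord_half i) (ord_half j).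

Lemma mul_parity_mx P X Y Q P' X' Y' Q' :
  parity_mx P X Y Q * parity_mx P' X' Y' Q' =
  parity_mx (P * P' + X * Y') (P * X' + X * Q') (Y * P' + Q * Y') (Y * X' + Q * Q').
Proof.
apply/matrixP => i j; rewrite -!mulmxE !mxE sum_ord_double.
under eq_bigr => x _ do rewrite !mxE odd_double ord_half_even.
under [X in _ + X]eq_bigr => x _ do rewrite !mxE /= odd_double ord_half_odd /=.
by case: (odd i); case: (odd j); rewrite !mxE.
Qed.

Lemma parity_mx1 : parity_mx 1 0 0 1 = 1.
Proof.
apply/matrixP => i j; rewrite !mxE.
have half_spec (l : 'I_d.*2) : (odd l + (ord_half l).*2)%N = l by exact: odd_double_half.
have eq_ij : (i == j) = (odd i == odd j) && (ord_half i == ord_half j).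
  apply/eqP/andP => [-> //|[/eqP odd_ij /eqP half_ij]].
  by apply/val_inj; rewrite /= -(half_spec i) -(half_spec j) odd_ij half_ij.
by rewrite eq_ij; case: (odd i); case: (odd j); rewrite ?mxE.
Qed.

Lemma parity_mx_even_odd P X Y Q x y : parity_mx P X Y Q (ord_even x) (ord_odd y) = X x y.
Proof. by rewrite mxE /= !odd_double ord_half_even ord_half_odd. Qed.

Lemma antidiag_parity_mxX X Y t :
  parity_mx 0 X Y 0 ^+ t.*2.+1 = parity_mx 0 (X * (Y * X) ^+ t) (Y * (X * Y) ^+ t) 0.
Proof.
elim: t => [|t IHt]; first by rewrite !expr0 !mulr1 expr1.
rewrite doubleS 2!exprSr IHt !mul_parity_mx.
by rewrite !(mulr0, mul0r, addr0, add0r) !exprSr !mulrA.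
Qed.

End ParityBlocks.

Section LowerBidiag.
Variables (R : comUnitRingType) (d' : nat).
Local Notation d := d'.+1.

Definition lower_bidiag : 'M[R]_d :=
  \matrix_(i, j) if (j == i :> nat) || (j.+1 == i :> nat) then 1 else 0.

Definition alt_lower : 'M[R]_d :=
  \matrix_(i, j) if (j <= i)%N then (-1) ^+ (i - j) else 0.

Lemma sum_ord_delta (F : 'I_d -> R) (c : 'I_d) :
  \sum_(l < d) (l == c :> nat)%:R * F l = F c.
Proof.
rewrite (bigD1 c) //= eqxx mul1r big1 ?addr0 // => l.
by rewrite val_eqE => /negPf ->; rewrite mul0r.
Qed.

Lemma lower_bidiag_mulV : lower_bidiag * alt_lower = 1.
Proof.
apply/matrixP => x w; rewrite -mulmxE !mxE.
have row_x l : lower_bidiag x l = (l == x :> nat)%:R + (l.+1 == x :> nat)%:R.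
  by rewrite mxE; case: eqP => [->|_]; case: eqP => [|_]; rewrite ?addr0 ?add0r //; lia.
under eq_bigr => l _ do rewrite row_x mulrDl.
rewrite big_split sum_ord_delta /= mxE.
case: (posnP x) => [x0|x_gt0].
  rewrite big1 => [|l _]; last by rewrite x0 mul0r.
  rewrite addr0 -val_eqE /= x0; case: (posnP w) => [->|w_gt0]; first by rewrite expr0.
  by rewrite leqNgt w_gt0 eq_sym gtn_eqF.
have lt_x' : (x.-1 < d)%N by have := ltn_ord x; lia.
rewrite (eq_bigr (fun l : 'I_d => (l == Ordinal lt_x' :> nat)%:R * alt_lower l w));
  last first.
  by move=> l _; congr (_%:R * _); apply/eqP/eqP => /=; lia.
rewrite sum_ord_delta !mxE /= -val_eqE /=.
case: (ltngtP w x) => [lt_wx|lt_xw|->].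
- rewrite ifT; last by lia.
  by rewrite (_ : (x - w = (x.-1 - w).+1)%N) ?exprS ?mulN1r ?addNr //; lia.
- by rewrite ifF ?addr0 //; lia.
- by rewrite subnn ifF ?addr0 //; lia.
Qed.

Lemma lower_bidiag_unit : lower_bidiag \is a GRing.unit.
Proof. by case: (mulmx1_unit lower_bidiag_mulV). Qed.

Lemma lower_bidiagV : lower_bidiag^-1 = alt_lower.
Proof. by rewrite -[alt_lower](mulKr lower_bidiag_unit) lower_bidiag_mulV mulr1. Qed.

Lemma det_lower_bidiag : \det lower_bidiag = 1.
Proof.
rewrite det_trig; last by apply/is_trig_mxP => i j lt_ij; rewrite mxE ifF //; lia.
by rewrite big1 // => i _; rewrite mxE eqxx.
Qed.

End LowerBidiag.

Lemma det_ursub0 (R : comRingType) k m (X : 'M[R]_(k + m)) :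
  ursubmx X = 0 -> \det X = \det (ulsubmx X) * \det (drsubmx X).
Proof. by move=> X_ur; rewrite -[X in LHS]submxK X_ur det_lblock. Qed.

Lemma det_dlsub0 (R : comRingType) k m (X : 'M[R]_(k + m)) :
  dlsubmx X = 0 -> \det X = \det (ulsubmx X) * \det (drsubmx X).
Proof. by move=> X_dl; rewrite -[X in LHS]submxK X_dl det_ublock. Qed.

Lemma det_exprz_shift (R : comUnitRingType) p (B X : 'M[R]_p.+1) (r s : 'I_p.+1)
    (f : int -> R) (c : 'I_p.+1 -> int) (n : nat) :
  \det B = 1 -> (forall t, f t = (B ^ t * X) r s) ->
  \det (\matrix_(i, j) f (c j + n%:Z - (i : nat)%:Z)) =
  \det (\matrix_(i, j) f (c j - (i : nat)%:Z)).
Proof.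
move=> detB f_pow.
have unit_B : B \is a GRing.unit by rewrite unitmxE detB unitr1.
pose L : 'M[R]_p.+1 := \matrix_(i, l) (B ^ (- (i : nat)%:Z)) r l.
pose Y : 'M[R]_p.+1 := \matrix_(l, j) (B ^ c j * X) l s.
have factor e : \matrix_(i, j) f (c j + e - (i : nat)%:Z) = L *m (B ^ e *m Y).
  apply/matrixP => i j; rewrite mxE f_pow addrC [c j + e]addrC !exprzDr // -!mulrA.
  rewrite [LHS]mxE [RHS]mxE; apply: eq_bigr => l _; rewrite !mxE.
  by congr (_ * _); apply: eq_bigr => l' _; rewrite /Y !mxE.
have detBn : \det (B ^+ n) = 1.
  by elim: n => [|n IHn]; rewrite ?det1 // exprS -mulmxE det_mulmx detB IHn mulr1.
have -> : \matrix_(i, j) f (c j - (i : nat)%:Z) = L *m (B ^ 0 *m Y).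
  by rewrite -factor; apply/matrixP => i j; rewrite !mxE addr0.
by rewrite factor !det_mulmx detBn expr0z det1.
Qed.

Section Strip.
Variable d' : nat.
Local Notation d := d'.+1.
Local Notation K := d'.*2.+1.
Local Notation M := (lower_bidiag rat d').

Lemma transfer_parity : transfer K = parity_mx 0 M M^T 0.
Proof.
apply/matrixP => i j; rewrite !mxE.
have := odd_double_half i; have := odd_double_half j.
by case: (odd i); case: (odd j) => /= hj hi; rewrite ?mxE /=; repeat case: ifP => //; lia.
Qed.

Local Notation B := (M * M^T).

Lemma M_unit : M \is a GRing.unit. Proof. exact: lower_bidiag_unit. Qed.

Lemma MT_unit : M^T \is a GRing.unit. Proof. by rewrite unitr_trmx M_unit. Qed.

Local Notation A := (parity_mx 0 M M^T 0).

Lemma parity_mx_first_last (P X Y Q : 'M[rat]_d) :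
  parity_mx P X Y Q ord0 ord_max = X ord0 ord_max.
Proof.
have even_first : ord_even ord0 = ord0 :> 'I_d.*2 by exact: val_inj.
have odd_last : ord_odd ord_max = ord_max :> 'I_d.*2 by exact: val_inj.
by rewrite -even_first -odd_last parity_mx_even_odd.
Qed.

Lemma C_nat (N : nat) : C K N 0 K = (A ^+ N) ord0 ord_max.
Proof. by rewrite /C (pathcount_expmx N (ord0 : 'I_K.+1) ord_max) transfer_parity. Qed.

(* The cast computes the power in the ring 'M_d.*2 of the parity lemmas rather
   than in the convertible 'M_K.+1, the type of [transfer K]. *)
Lemma C_Negz N : C K (Negz N) 0 K = ((invmx A : 'M_d.*2) ^+ N.+1) ord0 ord_max.
Proof.
have inord_first : inord 0 = ord0 :> 'I_K.+1 := inord_val ord0.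
have inord_last : inord K = ord_max :> 'I_K.+1 := inord_val ord_max.
by rewrite /C inord_first inord_last transfer_parity.
Qed.

Lemma parity_bidiagV : invmx A = parity_mx 0 M^T^-1 M^-1 0.
Proof.
have A_mulV : A *m parity_mx 0 M^T^-1 M^-1 0 = 1%:M.
  rewrite mulmxE mul_parity_mx !(mul0r, mulr0, addr0, add0r).
  by rewrite !mulrV ?M_unit ?MT_unit // parity_mx1.
have [unit_A _] := mulmx1_unit A_mulV.
by rewrite -[RHS](mulKmx unit_A) A_mulV mulmx1.
Qed.

Lemma C_odd (t : int) : C K (2 * t + 1) 0 K = (B ^ t * M) ord0 ord_max.
Proof.
case: t => [t|s].
  rewrite (_ : 2 * Posz t + 1 = (t.*2.+1)%N); last by rewrite -muln2; lia.
  by rewrite C_nat antidiag_parity_mxX parity_mx_first_last mulr_exprM_rotate.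
rewrite (_ : 2 * Negz s + 1 = Negz s.*2); last by rewrite !NegzE -muln2; lia.
rewrite C_Negz parity_bidiagV antidiag_parity_mxX parity_mx_first_last mulr_exprM_rotate.
by rewrite NegzE -exprz_inv -exprnP invrM ?M_unit ?MT_unit // exprSr mulrA (divrK M_unit).
Qed.

Definition D2 (t : int) : rat := D K (2 * t).

Lemma D2E t : D2 t = (B ^ (t + d'%:Z) * M) ord0 ord_max.
Proof. by rewrite /D2 /D -C_odd; congr (C _ _ _ _); rewrite -muln2; lia. Qed.

Lemma D2_transfer (r : nat) : D2 (r%:Z - d'%:Z) = (transfer K ^+ r.*2.+1) ord0 ord_max.
Proof.
rewrite /D2 /D (_ : 2 * _ + _ = (r.*2.+1)%N :> int); last by rewrite -!muln2; lia.
exact: (pathcount_expmx _ (ord0 : 'I_K.+1) ord_max).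
Qed.

Lemma transfer_above (i j : 'I_K.+1) : (i.+1 < j)%N -> transfer K i j = 0.
Proof. by move=> lt_ij; rewrite mxE ifF //; apply/negbTE; rewrite negb_or; lia. Qed.

Lemma transfer_super (i j : 'I_K.+1) : i.+1 = j -> transfer K i j = 1.
Proof. by move=> eq_ij; rewrite mxE eq_ij eqxx. Qed.

Lemma D2_vanish t : - (d'%:Z) <= t <= -1 -> D2 t = 0.
Proof.
move=> /andP [t_ge t_le].
have [r -> lt_rd] : exists2 r : nat, t = r%:Z - d'%:Z & (r < d')%N.
  by exists (absz (t + d'%:Z)); lia.
by rewrite D2_transfer (expmx_above transfer_above) //= -muln2; lia.
Qed.

Lemma D2_0 : D2 0 = 1.
Proof.
by rewrite -(subrr (d'%:Z)) D2_transfer (expmx_super transfer_above transfer_super).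
Qed.

Lemma D2_Nd : D2 (- d%:Z) = (-1) ^+ d'.
Proof.
rewrite D2E (_ : _ + _ = -1); last by lia.
rewrite -exprz_inv expr1z invrM ?M_unit ?MT_unit // (divrK M_unit) -trmxV mxE.
by rewrite lower_bidiagV mxE /= subn0.
Qed.

Lemma det_D2_shift (c : 'I_d -> int) (n : nat) :
  \det (\matrix_(i, j) D2 (c j + n%:Z - (i : nat)%:Z)) =
  \det (\matrix_(i, j) D2 (c j - (i : nat)%:Z)).
Proof.
have det_B : \det B = 1 by rewrite -mulmxE det_mulmx det_tr det_lower_bidiag mulr1.
apply: (det_exprz_shift (B := B) (X := B ^ d'%:Z * M) (r := ord0) (s := ord_max)) => // t.
by rewrite D2E exprzDr ?mulrA // unitmxE det_B unitr1.
Qed.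

End Strip.

Section Reciprocity.
Variables (k' m n : nat).
Local Notation k := k'.+1.
Local Notation a := (D2 (k' + m)).

Let c (j : nat) : int := if (j < k)%N then j%:Z else j%:Z - (k + m)%:Z - n%:Z.

Lemma det_shift_c :
  \det (\matrix_(i < k + m, j < k + m) a (c j + n%:Z - (i : nat)%:Z)) =
  \det (\matrix_(i < k + m, j < k + m) a (c j - (i : nat)%:Z)).
Proof. exact: (det_D2_shift (fun j => c j)). Qed.

Lemma det_lower_blocks :
  \det (\matrix_(i < k + m, j < k + m) a (c j + n%:Z - (i : nat)%:Z)) =
  \det (\matrix_(i < k, j < k) a (n%:Z + (j : nat)%:Z - (i : nat)%:Z)) *
  (-1) ^+ ((k' + m) * m).
Proof.
rewrite det_ursub0; last first.
  apply/matrixP => i j; rewrite !mxE /c /= ifF; last by lia.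
  by apply: D2_vanish; have := ltn_ord i; have := ltn_ord j; lia.
congr (_ * _).
  congr (\det _); apply/matrixP => i j.
  by rewrite !mxE /c /= ifT ?ltn_ord //; congr (D2 _ _); lia.
rewrite det_trig; last first.
  apply/is_trig_mxP => i j lt_ij; rewrite !mxE /c /= ifF; last by lia.
  by apply: D2_vanish; have := ltn_ord j; lia.
rewrite (eq_bigr (fun=> (-1) ^+ (k' + m))) => [|i _].
  by rewrite prodr_const card_ord exprM.
rewrite !mxE /c /= ifF; last by lia.
by rewrite -D2_Nd; congr (D2 _ _); lia.
Qed.

Lemma det_upper_blocks :
  \det (\matrix_(i < k + m, j < k + m) a (c j - (i : nat)%:Z)) =
  \det (\matrix_(i < m, j < m) a ((j : nat)%:Z - (i : nat)%:Z - (k + m)%:Z - n%:Z)).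
Proof.
rewrite det_dlsub0; last first.
  apply/matrixP => i j; rewrite !mxE /c /= ifT ?ltn_ord //.
  by apply: D2_vanish; have := ltn_ord i; have := ltn_ord j; lia.
rewrite -[X in X * _]det_tr det_trig; last first.
  apply/is_trig_mxP => i j lt_ij; rewrite !mxE /c /= ifT ?ltn_ord //.
  by apply: D2_vanish; have := ltn_ord j; lia.
rewrite big1 => [|i _]; last by rewrite !mxE /c /= ifT ?ltn_ord // subrr D2_0.
rewrite mul1r; congr (\det _); apply/matrixP => i j.
by rewrite !mxE /c /= ifF; [congr (D2 _ _) | ]; lia.
Qed.

Lemma det_D2_reciprocity :
  \det (\matrix_(i < k, j < k) a (n%:Z + (j : nat)%:Z - (i : nat)%:Z)) =
  (-1) ^+ (k * m) *
  \det (\matrix_(i < m, j < m) a ((j : nat)%:Z - (i : nat)%:Z - (k + m)%:Z - n%:Z)).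
Proof.
have even_exp : odd (k * m + (k' + m) * m) = false.
  rewrite -mulnDl oddM (_ : (k + (k' + m) = k'.*2 + m.+1)%N); last by rewrite -muln2; lia.
  by rewrite oddD odd_double /=; case: (odd m).
rewrite -det_upper_blocks -det_shift_c det_lower_blocks mulrCA -exprD -signr_odd even_exp.
by rewrite expr0 mulr1.
Qed.

End Reciprocity.

Theorem theorem18 (n k m : nat) (hk : (0 < k)%N) (hm : (0 < m)%N) :
  \det (\matrix_(i < k, j < k)
          D (2 * k + 2 * m - 1)%N
            (2 * (n : int) + 2 * ((j : nat) : int) - 2 * ((i : nat) : int)))
  = (-1) ^+ (k * m) *
    \det (\matrix_(i < m, j < m)
          D (2 * k + 2 * m - 1)%N
            (- 2 * (n : int) - 2 * ((j : nat) : int) + 2 * ((i : nat) : int)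
             - 2 * (k : int) - 2 * (m : int))).
Proof.
case: k hk => [//|k'] _.
rewrite (_ : (2 * k'.+1 + 2 * m - 1)%N = (k' + m).*2.+1); last by rewrite -muln2; lia.
rewrite -[in RHS]det_tr; apply: etrans (etrans (det_D2_reciprocity k' m n) _).
  by congr (\det _); apply/matrixP => i j; rewrite !mxE /D2; congr (D _ _); lia.
by congr (_ * \det _); apply/matrixP => i j; rewrite !mxE /D2; congr (D _ _); lia.
Qed.
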